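(* Let $H_1,\dots,H_K$ be half spaces in $\mathbb{R}^n$ such that the sets $H_i\cap B_2$, $i=1,\dots,K$, are pairwise disjoint. Then at most two of the half spaces $H_i$ intersect $B_1$.
   Context: $B_r$ denotes the open ball of radius $r$ centered at the origin in $\mathbb{R}^n$. *)

From mathcomp Require Import all_boot all_order all_algebra.
From mathcomp Require Import boolp classical_sets.
Set Implicit Arguments. Unset Strict Implicit. Unset Printing Implicit Defensive.
Import Order.TTheory GRing.Theory Num.Theory.
Local Open Scope ring_scope.
Local Open Scope classical_set_scope.

Definition dotv (R : rcfType) (n : nat) (u v : 'rV[R]_n) : R :=
  \sum_(i < n) u ord0 i * v ord0 i.

Definition enorm (R : rcfType) (n : nat) (x : 'rV[R]_n) : R :=
  Num.sqrt (dotv x x).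

Definition oball (R : rcfType) (n : nat) (r : R) : set 'rV[R]_n :=
  [set x | enorm x < r].

Definition halfspace (R : rcfType) (n : nat) (H : set 'rV[R]_n) : Prop :=
  exists (a : 'rV[R]_n) (b : R), a != 0 /\ H = [set x | b <= dotv a x].

From mathcomp Require Import all_boot all_order all_algebra.
From mathcomp Require Import boolp classical_sets.
From mathcomp Require Import ring lra.
Set Implicit Arguments. Unset Strict Implicit. Unset Printing Implicit Defensive.
Import Order.TTheory GRing.Theory Num.Theory.
Local Open Scope ring_scope.
Local Open Scope classical_set_scope.

(* Write each half space as { x | b <= <u, x> } with |u| = 1.  If it meets B_1
   then b < 1.  If two such half spaces meet B_1 while being disjoint inside
   B_2, their normals satisfy <u, v> < -1/2: otherwise a suitable multiple of
   u + v lies in both of them and in B_2.  Three unit vectors with pairwise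
   inner products below -1/2 would give |u1 + u2 + u3|^2 < 3 - 3 = 0. *)

Section Dot.
Variables (R : rcfType) (n : nat).
Implicit Types (u v w x y : 'rV[R]_n).

Lemma dotvC u v : dotv u v = dotv v u.
Proof. by apply: eq_bigr => i _; rewrite mulrC. Qed.

Lemma dotvDl u v w : dotv (u + v) w = dotv u w + dotv v w.
Proof. by rewrite /dotv -big_split; apply: eq_bigr => i _; rewrite !mxE mulrDl. Qed.

Lemma dotvZl (k : R) u w : dotv (k *: u) w = k * dotv u w.
Proof. by rewrite /dotv mulr_sumr; apply: eq_bigr => i _; rewrite !mxE mulrA. Qed.

Lemma dotvNl u w : dotv (- u) w = - dotv u w.
Proof. by rewrite -scaleN1r dotvZl mulN1r. Qed.

Lemma dotvDr u v w : dotv w (u + v) = dotv w u + dotv w v.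
Proof. by rewrite dotvC dotvDl !(dotvC w). Qed.

Lemma dotvZr (k : R) u w : dotv w (k *: u) = k * dotv w u.
Proof. by rewrite dotvC dotvZl dotvC. Qed.

Lemma dotvNr u w : dotv w (- u) = - dotv w u.
Proof. by rewrite dotvC dotvNl dotvC. Qed.

Lemma dotvv_ge0 u : 0 <= dotv u u.
Proof. by apply: sumr_ge0 => i _; rewrite -expr2 sqr_ge0. Qed.

Lemma dotvv_gt0 u : u != 0 -> 0 < dotv u u.
Proof.
move=> u_neq0; rewrite lt_def dotvv_ge0 andbT.
apply: contra u_neq0 => /eqP uu0; apply/eqP/matrixP => i j; rewrite mxE (ord1 i).
have sq_ge0 (k : 'I_n) : predT k -> 0 <= u ord0 k * u ord0 k.
  by rewrite -expr2 sqr_ge0.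
by have /eqP := psumr_eq0P sq_ge0 uu0 (i := j) isT; rewrite mulf_eq0 orbb => /eqP.
Qed.

Lemma oballE (r : R) x : 0 < r -> oball r x <-> dotv x x < r ^+ 2.
Proof.
move=> r_gt0; rewrite /oball /enorm /=.
by rewrite -{1}(gtr0_norm r_gt0) -sqrtr_sqr ltr_sqrt ?exprn_gt0.
Qed.

Lemma halfspace_unit_normal (H : set 'rV[R]_n) : halfspace H ->
  exists u (b : R), dotv u u = 1 /\ H = [set x | b <= dotv u x].
Proof.
case=> a [b [a_neq0 ->]].
have aa_gt0 := dotvv_gt0 a_neq0.
set s := Num.sqrt (dotv a a).
have s_gt0 : 0 < s by rewrite sqrtr_gt0.
have s2 : s ^+ 2 = dotv a a by rewrite sqr_sqrtr // ltW.
exists (s^-1 *: a), (b / s); split.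
  by rewrite dotvZl dotvC dotvZl -s2; field; rewrite gt_eqF.
by apply/seteqP; split=> x /=; rewrite dotvZl [b / s]mulrC ler_pM2l ?invr_gt0.
Qed.

Lemma unit_halfspace_offset_lt1 u x (b : R) :
  dotv u u = 1 -> b <= dotv u x -> dotv x x < 1 -> b < 1.
Proof.
move=> uu1 b_le xx_lt1; have := dotvv_ge0 (u - x).
by rewrite dotvDl !dotvDr !dotvNl !dotvNr uu1 (dotvC x u); lra.
Qed.

Lemma disjoint_unit_halfspaces_obtuse u v (bu bv : R) :
  dotv u u = 1 -> dotv v v = 1 -> bu < 1 -> bv < 1 ->
  (forall y, bu <= dotv u y -> bv <= dotv v y -> dotv y y < 4 -> False) ->
  dotv u v < - (1 / 2).
Proof.
move=> uu1 vv1 bu_lt1 bv_lt1 no_common; rewrite ltNge; apply/negP => c_ge.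
set c := dotv u v in c_ge.
set b := Num.max (Num.max bu bv) 0.
have b_lt1 : b < 1 by rewrite !gt_max bu_lt1 bv_lt1 ltr01.
have b_ge0 : 0 <= b by rewrite le_max lexx orbT.
have bu_le : bu <= b by rewrite !le_max lexx.
have bv_le : bv <= b by rewrite !le_max lexx orbT.
have c1_gt0 : 0 < 1 + c by lra.
set t := (1 + c)^-1.
have tK : t * (1 + c) = 1 by rewrite mulVf // gt_eqF.
have t_gt0 : 0 < t by rewrite invr_gt0.
(* y := b (u + v) / (1 + c) satisfies <u, y> = <v, y> = b and |y|^2 = 2 b^2 t <= 4 b^2. *)
apply: (no_common ((b * t) *: (u + v))).
- by rewrite dotvZr dotvDr uu1 -/c -mulrA tK mulr1.
- by rewrite dotvZr dotvDr vv1 (dotvC v u) -/c addrC -mulrA tK mulr1.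
- rewrite dotvZl dotvZr dotvDl !dotvDr uu1 vv1 (dotvC v u) -/c.
  have -> : b * t * (b * t * (1 + c + (c + 1))) = 2 * b * b * t * (t * (1 + c)).
    by ring.
  rewrite tK mulr1; have t_le2 : t <= 2 by nra.
  nra.
Qed.

Lemma halfspaces_meeting_ball_obtuse (H1 H2 : set 'rV[R]_n) u1 u2 (b1 b2 : R) :
  dotv u1 u1 = 1 -> dotv u2 u2 = 1 ->
  H1 = [set x | b1 <= dotv u1 x] -> H2 = [set x | b2 <= dotv u2 x] ->
  (H1 `&` oball 2) `&` (H2 `&` oball 2) = set0 ->
  H1 `&` oball 1 !=set0 -> H2 `&` oball 1 !=set0 -> dotv u1 u2 < - (1 / 2).
Proof.
have in_B1 x : oball 1 x -> dotv x x < 1 by move/(oballE _ ltr01); rewrite expr1n.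
move=> u11 u21 -> -> disj [x1 [hx1 /in_B1 x11]] [x2 [hx2 /in_B1 x21]].
apply: (disjoint_unit_halfspaces_obtuse u11 u21
  (unit_halfspace_offset_lt1 u11 hx1 x11) (unit_halfspace_offset_lt1 u21 hx2 x21)).
move=> y y1 y2 yy_lt4.
have y_in_B2 : oball 2 y by apply/oballE; rewrite ?ltr0n // -natrX.
by have : set0 y by rewrite -disj.
Qed.

Lemma no_three_obtuse_unit_vectors u v w :
  dotv u u = 1 -> dotv v v = 1 -> dotv w w = 1 ->
  dotv u v < - (1 / 2) -> dotv v w < - (1 / 2) -> dotv w u < - (1 / 2) -> False.
Proof.
move=> uu1 vv1 ww1 uv wv wu; have := dotvv_ge0 (u + v + w).
rewrite !dotvDl !dotvDr uu1 vv1 ww1 (dotvC v u) (dotvC w v) (dotvC u w).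
lra.
Qed.

End Dot.

Theorem lemma4p9 (R : rcfType) (n K : nat) (H : 'I_K -> set 'rV[R]_n)
  (hH : forall i, halfspace (H i))
  (hdisj : forall i j : 'I_K, i != j ->
     (H i `&` (@oball R n 2)) `&` (H j `&` (@oball R n 2)) = set0) :
  (#|[set i : 'I_K | `[< H i `&` (@oball R n 1) !=set0 >]]| <= 2)%N.
Proof.
rewrite leqNgt; apply/negP => /card_gt2P [i [j [k [[hi hj hk] [ij jk ki]]]]].
move: hi hj hk; rewrite !inE => /asboolP hi /asboolP hj /asboolP hk.
have [ui [bi [uii ei]]] := halfspace_unit_normal (hH i).
have [uj [bj [ujj ej]]] := halfspace_unit_normal (hH j).
have [uk [bk [ukk ek]]] := halfspace_unit_normal (hH k).
apply: (no_three_obtuse_unit_vectors uii ujj ukk).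
- exact: halfspaces_meeting_ball_obtuse uii ujj ei ej (hdisj _ _ ij) hi hj.
- exact: halfspaces_meeting_ball_obtuse ujj ukk ej ek (hdisj _ _ jk) hj hk.
- exact: halfspaces_meeting_ball_obtuse ukk uii ek ei (hdisj _ _ ki) hk hi.
Qed.
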